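(* Let $n=p_1^{r_1}p_2^{r_2}\cdots p_k^{r_k}$, where $k\ge1$, $p_1,\ldots,p_k$ are distinct primes and $r_1\ge r_2\ge\cdots\ge r_k\ge1$. If $n$ is not prime, then $$F(G(n))=\sum_{\substack{i_1<i_2<\cdots<i_s\\ \emptyset\ne\{i_1,\ldots,i_s\}\subseteq\{1,\ldots,k\}}} r_{i_1}r_{i_2}\cdots r_{i_s}\,x_{i_1}x_{i_2}\cdots x_{i_s}.$$ If $n$ is prime, then $F(G(n))=1$.
   Context: For an integer $n\ge2$, $G(n)$ is the simple undirected graph whose vertex set is the set of divisors of $n$ greater than $1$, two distinct vertices $a,b$ adjacent iff $\gcd(a,b)>1$. A clique is a set of pairwise adjacent vertices; a set $S$ of cliques of $G$ is a total clique covering if every vertex lies in some member of $S$ and every edge has both endpoints in some member of $S$; $\theta_t(G)$ is the minimum size of a total clique covering. The code $\sigma(G)$ of a graph $G$ with $m$ vertices and $s\ge0$ isolated vertices: let $k'=\theta_t(G)-s$; for each total clique covering $S=\{C_1,\ldots,C_{s+k'}\}$ with $|S|=\theta_t(G)$ (where $C_1,\ldots,C_s$ are the singletons of the isolated vertices) and each bijective assignment of the first $k'$ primes to $C_{s+1},\ldots,C_{s+k'}$, label each isolated vertex by $1$ and each other vertex $v$ by the product of primes assigned to the cliques among $C_{s+1},\ldots,C_{s+k'}$ containing $v$, and list the labels in non-decreasing order; $\sigma[S]$ is the lexicographically least sequence so obtained from $S$, and $\sigma(G)$ is the lexicographically least among all $\sigma[S]$ with $|S|=\theta_t(G)$. The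 normal polynomial representation $F(G)\in\mathbb{Z}_{\ge0}[x_1,x_2,\ldots]$ is $\sum_{\lambda} m(\lambda)$, summed over the entries $\lambda$ of $\sigma(G)$ (with multiplicity), where $m(1)=1$ and $m(q_{j_1}q_{j_2}\cdots q_{j_r})=x_{j_1}x_{j_2}\cdots x_{j_r}$ for distinct indices $j_1,\ldots,j_r$, $q_j$ denoting the $j$-th prime. *)

From HB Require Import structures.
From mathcomp Require Import all_boot all_order all_algebra.
From mathcomp Require Import fingroup perm.
From mathcomp Require Import mpoly.

Set Implicit Arguments.
Unset Strict Implicit.
Unset Printing Implicit Defensive.

Import GRing.Theory.
Local Open Scope ring_scope.

(* Primes q_1 < q_2 < ... ; we index from 0:  nth_prime j = q_(j+1).        *)

Lemma next_prime_ex (p : nat) : exists q, ((p < q) && prime q)%N.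
Proof. by case: (prime_above p) => q h1 h2; exists q; rewrite h1 h2. Qed.

Definition next_prime (p : nat) : nat := ex_minn (next_prime_ex p).

Fixpoint nth_prime (j : nat) : nat :=
  if j is j'.+1 then next_prime (nth_prime j') else 2%N.

(* Simple graphs: vertex set V : {set T} inside a finType T, adjacency e     *)
(* (only used on pairs of distinct vertices of V).                           *)

Section Graphs.
Variables (T : finType) (V : {set T}) (e : rel T).

Definition is_clique (C : {set T}) : bool :=
  (C \subset V) && [forall x in C, forall y in C, (x != y) ==> e x y].

Definition is_edge (x y : T) : bool :=
  [&& x \in V, y \in V, x != y & e x y].

Definition total_clique_covering (S : {set {set T}}) : bool :=
  [&& [forall C in S, is_clique C],
      [forall v in V, exists C in S, v \in C] &
      [forall x, forall y, is_edge x y ==> [exists C in S, (x \in C) && (y \in C)]]].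

Definition min_tcc (S : {set {set T}}) : bool :=
  total_clique_covering S &&
  [forall S' : {set {set T}}, total_clique_covering S' ==> (#|S| <= #|S'|)%N].

Definition isolated (v : T) : bool := (v \in V) && [forall u, ~~ is_edge v u].

(* the cliques C_(s+1), ..., C_(s+k') : S minus the singletons of isolated
   vertices *)
Definition nonisolated_cliques (S : {set {set T}}) : {set {set T}} :=
  S :\: [set [set v] | v in [set v | isolated v]].

(* label of v for the assignment: i-th clique of enum S' gets prime q_(s i + 1) *)
Definition label (S : {set {set T}}) (s : 'S_(size (enum (nonisolated_cliques S))))
    (v : T) : nat :=
  if isolated v then 1%N
  else (\prod_(i < size (enum (nonisolated_cliques S))
              | v \in nth set0 (enum (nonisolated_cliques S)) i)
          nth_prime (s i))%N.

Definition code_of (S : {set {set T}}) s : seq nat :=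
  sort leq [seq label (S := S) s v | v <- enum V].

(* all sequences obtained from minimum total clique coverings and bijective
   assignments of the first k' primes (every bijection is given by a
   permutation s of the indices of enum S') *)
Definition all_codes : seq (seq nat) :=
  flatten [seq [seq code_of (S := Cov) s
             | s <- enum [set: 'S_(size (enum (nonisolated_cliques Cov)))]]
          | Cov <- enum [set Cov : {set {set T}} | min_tcc Cov]].

End Graphs.

Fixpoint lexle (s t : seq nat) : bool :=
  match s, t with
  | [::], _ => true
  | _ :: _, [::] => false
  | a :: s', b :: t' => (a < b)%N || ((a == b) && lexle s' t')
  end.

Definition lexmin (cs : seq (seq nat)) : seq nat :=
  foldr (fun c m => if lexle c m then c else m) (head [::] cs) cs.

Definition code (T : finType) (V : {set T}) (e : rel T) : seq nat :=
  lexmin (all_codes V e).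

(* Normal polynomial representation.  F(G) lives in Z[x_1, x_2, ...]; we     *)
(* represent it through its images in {mpoly int[N]} under the ring map      *)
(* x_j |-> 'X_(j-1) for j <= N and x_j |-> 0 for j > N.                      *)
(* m(q_(j1) ... q_(jr)) = x_(j1) ... x_(jr), m(1) = 1.                        *)

Definition monomial_N (N : nat) (lam : nat) : {mpoly int[N]} :=
  \prod_(p <- primes lam) \sum_(i < N | nth_prime i == p) 'X_i.

Definition normal_poly_N (N : nat) (T : finType) (V : {set T}) (e : rel T)
  : {mpoly int[N]} :=
  \sum_(lam <- code V e) monomial_N N lam.

Definition Gn_vertices (n : nat) : {set 'I_n.+1} :=
  [set d : 'I_n.+1 | (1 < d)%N && (d %| n)%N].

Definition Gn_adj (n : nat) : rel 'I_n.+1 :=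
  fun a b => (a != b) && (1 < gcdn a b)%N.

Arguments Gn_vertices n : clear implicits.
Arguments Gn_adj n : clear implicits.

Definition F_Gn (N n : nat) : {mpoly int[N]} :=
  normal_poly_N N (Gn_vertices n) (Gn_adj n).

(* The sets C_i of divisors of n divisible by p_i are cliques, and they form
   the unique minimum total clique covering of G(n): a clique through the vertex
   p_i lies in C_i, and covering the edges at p_i forces C_i itself to appear.
   If n is not prime, G(n) has no isolated vertex, so a code comes from a
   bijection tau assigning the prime q_(tau i) to C_i; a divisor is labelled by
   the product of these primes over its prime support, and exactly
   r_(i_1) ... r_(i_s) divisors have support {i_1, ..., i_s}.  Hence the code
   for tau contains q_(tau i) exactly r_i times.  At the least prime where the
   multiplicities for tau and for the identity differ, the ordering
   r_1 >= ... >= r_k makes the identity code lexicographically smaller, so a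
   minimal tau preserves r and yields the same code as the identity; its
   normal polynomial is the claimed sum.  If n is prime, G(n) is a single
   isolated vertex, labelled 1. *)

From mathcomp Require Import all_boot all_order all_algebra.
From mathcomp Require Import fingroup perm mpoly zify.
Import Order.TTheory GRing.Theory.

Lemma lexleE (s t : seq nat) : lexle s t = (s <= t :> seqlexi nat)%O.
Proof.
elim: s t => [|a s IH] [|b t] //=; rewrite lexi_cons IH !leEnat.
by case: ltngtP.
Qed.

Lemma lexle_refl : reflexive lexle.
Proof. by move=> s; rewrite lexleE. Qed.

Lemma lexle_trans : transitive lexle.
Proof. by move=> t s u; rewrite !lexleE; apply: le_trans. Qed.

Lemma lexle_total : total lexle.
Proof. by move=> s t; rewrite !lexleE le_total. Qed.

Lemma lexle_cat2l (t s1 s2 : seq nat) : lexle (t ++ s1) (t ++ s2) = lexle s1 s2.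
Proof. by elim: t => //= a t ->; rewrite ltnn eqxx. Qed.

Lemma foldr_lexmin x0 (cs : seq (seq nat)) :
  let m := foldr (fun c m => if lexle c m then c else m) x0 cs in
  m \in x0 :: cs /\ {in x0 :: cs, forall d, lexle m d}.
Proof.
elim: cs => [|c cs]; first by split=> [|d /[!inE] /eqP->]; rewrite ?inE ?eqxx ?lexle_refl.
set m := foldr _ _ _ => /= -[m_in m_le].
have [cm|mc] := boolP (lexle c m).
  split=> [|d]; first by rewrite !inE eqxx orbT.
  rewrite !inE => /or3P[/eqP->|/eqP->|dcs]; rewrite ?lexle_refl //;
    by apply: lexle_trans cm (m_le _ _); rewrite inE ?eqxx ?dcs ?orbT.
have {}mc : lexle m c by move: (lexle_total c m); rewrite (negbTE mc).
split=> [|d]; first by move: m_in; rewrite !inE => /orP[]->; rewrite ?orbT.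
by rewrite !inE => /or3P[/eqP->|/eqP->//|dcs]; apply: m_le; rewrite inE ?eqxx ?dcs ?orbT.
Qed.

Lemma lexmin_mem cs : cs != [::] -> lexmin cs \in cs.
Proof.
case: cs => // c cs _; have [] := foldr_lexmin c (c :: cs).
by rewrite /lexmin /= inE => /orP[/eqP->|]; rewrite ?inE ?eqxx.
Qed.

Lemma lexmin_le cs : {in cs, forall d, lexle (lexmin cs) d}.
Proof.
by move=> d d_cs; have [_] := foldr_lexmin (head [::] cs) cs; apply; rewrite inE d_cs orbT.
Qed.

Lemma sorted_leq_filter_cat a {s : seq nat} : sorted leq s ->
  s = [seq x <- s | x <= a] ++ [seq x <- s | a < x].
Proof.
elim: s => //= x s IH x_s; have {}IH := IH (path_sorted x_s).
have [xa|ax] := leqP x a; first by rewrite /= -IH.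
have s_gt_a : all (fun y => a < y) s.
  by apply/allP=> y /(allP (order_path_min leq_trans x_s)); apply: leq_trans.
rewrite (all_filterP s_gt_a) (eq_in_filter (a2 := pred0)) ?filter_pred0 //.
by move=> y /(allP s_gt_a); rewrite /= ltnNge => /negbTE.
Qed.

Lemma sorted_nseq T (leT : rel T) n x : reflexive leT -> sorted leT (nseq n x).
Proof. by move=> refl; elim: n => // -[|n] //= ->; rewrite refl. Qed.

Lemma filter_leq_sorted_eq a {s1 s2 : seq nat} : sorted leq s1 -> sorted leq s2 ->
  (forall x, x < a -> count_mem x s1 = count_mem x s2) ->
  count_mem a s2 <= count_mem a s1 ->
  [seq x <- s1 | x <= a] =
    [seq x <- s2 | x <= a] ++ nseq (count_mem a s1 - count_mem a s2) a.
Proof.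
move=> so1 so2 eq_lt le_a.
apply: (sorted_eq leq_trans anti_leq); first exact: (sorted_filter leq_trans).
  rewrite (sorted_pairwise leq_trans) pairwise_cat -!(sorted_pairwise leq_trans).
  rewrite sorted_nseq // (sorted_filter leq_trans) // !andbT.
  by apply/allrelP => x y /[!mem_filter] /andP[xa _] /nseqP[-> _].
apply/allP => x _; apply/eqP; rewrite count_cat count_nseq !count_filter /=.
have cnt s : count (predI (pred1 x) (leq^~ a)) s = (x <= a) * count_mem x s.
  by elim: s => [|y s /= ->]; rewrite ?muln0 //; case: (eqVneq y x) => [->|]; case: (x <= a).
rewrite !cnt; have [xa|//|->] := ltngtP x a; rewrite !mul1n.
  by rewrite eq_lt // addn0.
by rewrite subnKC.
Qed.

Lemma sorted_count_lexlt a (s1 s2 : seq nat) :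
  sorted leq s1 -> sorted leq s2 -> size s1 = size s2 ->
  (forall x, x < a -> count_mem x s1 = count_mem x s2) ->
  count_mem a s2 < count_mem a s1 -> ~~ lexle s2 s1.
Proof.
move=> so1 so2 sz eq_lt lt_a.
have d_gt0 : 0 < count_mem a s1 - count_mem a s2 by rewrite subn_gt0.
have := sorted_leq_filter_cat a so1; have := sorted_leq_filter_cat a so2.
rewrite (filter_leq_sorted_eq a so1 so2 eq_lt (ltnW lt_a)) -catA.
case: (count_mem a s1 - count_mem a s2) d_gt0 => // d _ /= s2E s1E.
move: sz; set F := [seq x <- s2 | x <= a] in s1E s2E *.
rewrite s1E s2E lexle_cat2l !size_cat /=.
case: [seq x <- s2 | a < x] (filter_all (fun x => a < x) s2) => [|y G2].
  by move=> _ /addnI.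
by move=> /andP[ay _] _ /=; rewrite ltnNge (ltnW ay) (gtn_eqF ay).
Qed.

Lemma card_ord_pred m (P : pred nat) : #|[pred e : 'I_m | P e]| = count P (iota 0 m).
Proof. by rewrite -val_enum_ord count_map -sum1_count big_enum_cond sum1_card. Qed.

Lemma card_ord_pos_le m R : R < m -> #|[pred e : 'I_m | 0 < e <= R]| = R.
Proof.
move=> R_m; rewrite (card_ord_pred m (fun e => 0 < e <= R)) -(subnKC R_m).
rewrite iotaD count_cat /= add0n.
rewrite (eq_in_count (a2 := predT)) ?count_predT ?size_iota; last first.
  by move=> x; rewrite mem_iota /=; lia.
by rewrite (eq_in_count (a2 := pred0)) ?count_pred0 ?addn0 // => x; rewrite mem_iota /=; lia.
Qed.

Lemma card_ord_eq0 m : #|[pred e : 'I_m.+1 | e == 0 :> nat]| = 1.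
Proof.
rewrite (card_ord_pred _ (pred1 0)) /= (eq_in_count (a2 := pred0)) ?count_pred0 // => x.
by rewrite mem_iota /=; lia.
Qed.

Lemma widen_ord_inj [m n] (le_mn : m <= n) : injective (widen_ord le_mn).
Proof. by move=> i j eq_ij; apply: val_inj; apply: (congr1 val eq_ij). Qed.

Lemma sum_widen_set (M : nmodType) k N (k_le_N : k <= N) (F : {set 'I_N} -> M) :
  (\sum_(I : {set 'I_N} | (I != set0) && [forall i in I, (i < k)%N]) F I =
   \sum_(A : {set 'I_k} | A != set0) F (widen_ord k_le_N @: A))%R.
Proof.
have widen_inj := widen_ord_inj k_le_N.
rewrite (reindex_onto (fun A : {set 'I_k} => widen_ord k_le_N @: A)
                      (fun I => [set i | widen_ord k_le_N i \in I])) /=; last first.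
  move=> I /andP[_ /forall_inP I_lt_k]; apply/setP => j; apply/imsetP/idP => [[i]|j_I].
    by rewrite inE => i_I ->.
  have j_eq : widen_ord k_le_N (Ordinal (I_lt_k j j_I)) = j by apply: val_inj.
  by exists (Ordinal (I_lt_k j j_I)); rewrite ?inE j_eq.
apply: eq_bigl => A; rewrite imset_eq0.
have -> : [set i | widen_ord k_le_N i \in widen_ord k_le_N @: A] = A.
  by apply/setP => i; rewrite inE mem_imset.
rewrite eqxx andbT andb_idr // => _.
by apply/forall_inP => _ /imsetP[i _ ->]; exact: (ltn_ord i).
Qed.

Lemma nth_prime_prime j : prime (nth_prime j).
Proof. by case: j => // j; rewrite /= /next_prime; case: ex_minnP => q /andP[]. Qed.

Lemma nth_primeS j : nth_prime j < nth_prime j.+1.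
Proof. by rewrite /= /next_prime; case: ex_minnP => q /andP[]. Qed.

Lemma leq_nth_prime : {mono nth_prime : i j / i <= j}.
Proof. by apply: leq_mono; apply: homo_ltn nth_primeS => y x z; apply: ltn_trans. Qed.

Lemma ltn_nth_prime : {mono nth_prime : i j / i < j}.
Proof. exact: leqW_mono leq_nth_prime. Qed.

Lemma nth_prime_inj : injective nth_prime.
Proof. exact: incn_inj leq_nth_prime. Qed.

Section DivisorGraph.
Context {k : nat} {p : nat -> nat}.
Hypothesis p_prime : forall i, i < k -> prime (p i).
Hypothesis p_inj : forall i j, i < k -> j < k -> p i = p j -> i = j.

Definition factor_prod (e : 'I_k -> nat) : nat := \prod_(i < k) p i ^ e i.

Lemma prime_p (i : 'I_k) : prime (p i).
Proof. exact: p_prime. Qed.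

Lemma p_ord_inj : injective (fun i : 'I_k => p i).
Proof. by move=> i j /(p_inj _ _ (ltn_ord i) (ltn_ord j)) /val_inj. Qed.

Lemma factor_prod_gt0 e : 0 < factor_prod e.
Proof. by apply: prodn_gt0 => i; rewrite expn_gt0 prime_gt0 ?prime_p. Qed.

Lemma logn_factor_prod e q :
  logn q (factor_prod e) = \sum_(i < k) e i * (q == p i).
Proof.
suff: \sum_(i < k) e i * (q == p i) = logn q (factor_prod e) /\ 0 < factor_prod e.
  by case.
rewrite /factor_prod; elim/big_rec2: _ => [|i x y _ [-> y_gt0]]; first by rewrite logn1.
have pe_gt0 : 0 < p i ^ e i by rewrite expn_gt0 prime_gt0 ?prime_p.
by rewrite lognM // lognX (logn_prime _ (prime_p i)) muln_gt0 pe_gt0.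
Qed.

Lemma logn_p_factor_prod e (j : 'I_k) : logn (p j) (factor_prod e) = e j.
Proof.
rewrite logn_factor_prod (bigD1 j) //= eqxx muln1 big1 ?addn0 // => i ij.
by case: eqP => [/p_ord_inj ji|]; rewrite ?muln0 //; rewrite ji eqxx in ij.
Qed.

Lemma logn_factor_prod_eq0 e q : (forall j : 'I_k, q != p j) -> logn q (factor_prod e) = 0.
Proof.
by move=> q_p; rewrite logn_factor_prod big1 // => i _; rewrite (negbTE (q_p i)) muln0.
Qed.

Lemma dvdn_p_factor_prod e (j : 'I_k) : (p j %| factor_prod e) = (0 < e j).
Proof. by rewrite -(logn_p_factor_prod e j) logn_gt0 mem_primes prime_p factor_prod_gt0. Qed.

Lemma factor_prod_inj [e1 e2] : factor_prod e1 = factor_prod e2 -> e1 =1 e2.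
Proof. by move=> eq12 j; rewrite -(logn_p_factor_prod e1) eq12 logn_p_factor_prod. Qed.

Context {n : nat} {r : nat -> nat}.
Hypothesis nE : n = \prod_(i < k) p i ^ r i.
Hypothesis r_gt0 : forall i, i < k -> 0 < r i.

Lemma n_gt0 : 0 < n.
Proof. by rewrite nE factor_prod_gt0. Qed.

Lemma logn_p_n (j : 'I_k) : logn (p j) n = r j.
Proof. by rewrite nE (logn_p_factor_prod (fun i => r i)). Qed.

Lemma prime_dvdn_n [q] : prime q -> q %| n -> exists j : 'I_k, q = p j.
Proof.
move=> q_prime q_n; case: (pickP (fun j : 'I_k => q == p j)) => [j /eqP->|q_p]; first by exists j.
have: 0 < logn q n by rewrite logn_gt0 mem_primes q_prime n_gt0.
by rewrite nE (logn_factor_prod_eq0 (fun i => r i)) // => j; exact: negbT (q_p j).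
Qed.

Lemma dvdn_n_factor_prod [v] : v %| n -> v = factor_prod (fun i => logn (p i) v).
Proof.
move=> v_n; have v_gt0 := dvdn_gt0 n_gt0 v_n.
apply: eqn_from_log => //; first exact: factor_prod_gt0.
move=> q; case: (pickP (fun j : 'I_k => q == p j)) => [j /eqP->|q_p].
  by rewrite logn_p_factor_prod.
rewrite logn_factor_prod_eq0 => [|j]; last exact: negbT (q_p j).
apply/eqP; rewrite eqn0Ngt logn_gt0 mem_primes; apply/negP => /and3P[q_prime _ q_v].
have [j qj] := prime_dvdn_n q_prime (dvdn_trans q_v v_n).
by have := q_p j; rewrite /= qj eqxx.
Qed.

Lemma factor_prod_dvdn_n (e : 'I_k -> nat) : (forall i, e i <= r i) -> factor_prod e %| n.
Proof.
move=> le_er; rewrite nE /factor_prod; elim/big_rec2: _ => // i x y _ x_y.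
by rewrite dvdn_mul ?dvdn_exp2l.
Qed.

Lemma p_dvdn_n (j : 'I_k) : p j %| n.
Proof. by rewrite nE (dvdn_p_factor_prod (fun i => r i)) r_gt0. Qed.

Lemma r_lt_n (j : 'I_k) : r j < n.
Proof.
apply: leq_trans (ltn_expl _ (prime_gt1 (prime_p j))) _.
by apply: dvdn_leq n_gt0 _; rewrite nE (bigD1 j) //= dvdn_mulr.
Qed.

Local Notation V := (Gn_vertices n).
Local Notation E := (Gn_adj n).
Implicit Types (t : 'I_k -> 'I_k) (A : {set 'I_k}).

Definition pvertex (i : 'I_k) : 'I_n.+1 := inord (p i).
Definition pclique (i : 'I_k) : {set 'I_n.+1} := [set v in V | p i %| v].
Definition pcliques : {set {set 'I_n.+1}} := [set pclique i | i : 'I_k].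
Definition psupport (v : 'I_n.+1) : {set 'I_k} := [set i : 'I_k | p i %| v].

Lemma in_pclique i v : (v \in pclique i) = (v \in V) && (p i %| v).
Proof. by rewrite inE. Qed.

Lemma in_Gn_vertices (v : 'I_n.+1) : (v \in V) = (1 < v) && (v %| n).
Proof. by rewrite inE. Qed.

Lemma Gn_edgeE x y : is_edge V E x y = [&& x \in V, y \in V, x != y & 1 < gcdn x y].
Proof. by rewrite /is_edge /Gn_adj; case: (x != y). Qed.

Lemma psupport_neq0 [v] : v \in V -> psupport v != set0.
Proof.
rewrite in_Gn_vertices => /andP[v_gt1 v_n].
have [j pdiv_pj] := prime_dvdn_n (pdiv_prime v_gt1) (dvdn_trans (pdiv_dvd v) v_n).
by apply/set0Pn; exists j; rewrite inE -pdiv_pj pdiv_dvd.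
Qed.

Lemma pvertexE i : pvertex i = p i :> nat.
Proof. by rewrite inordK // ltnS (dvdn_leq n_gt0 (p_dvdn_n i)). Qed.

Lemma pvertex_in i : pvertex i \in V.
Proof. by rewrite in_Gn_vertices pvertexE prime_gt1 ?prime_p ?p_dvdn_n. Qed.

Lemma gcdn_p_gt1 (i : 'I_k) x : (1 < gcdn (p i) x) = (p i %| x).
Proof.
apply/idP/idP => [|p_x]; last by rewrite (gcdn_idPl p_x) prime_gt1 ?prime_p.
by apply: contraLR; rewrite -prime_coprime ?prime_p // => /eqP->.
Qed.

Lemma pclique_clique i : is_clique V E (pclique i).
Proof.
apply/andP; split; first by apply/subsetP => v /[!inE] /andP[].
apply/forall_inP => x /[!inE] /andP[x_in p_x]; apply/forall_inP => y /[!inE] /andP[_ p_y].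
apply/implyP => xy; rewrite /Gn_adj xy /= (leq_trans (prime_gt1 (prime_p i))) //.
rewrite dvdn_leq ?dvdn_gcd ?p_x // gcdn_gt0.
by case/andP: x_in => /ltnW->.
Qed.

Lemma pvertex_in_pclique i j : (pvertex i \in pclique j) = (i == j).
Proof.
rewrite inE pvertex_in pvertexE dvdn_prime2 ?prime_p //.
by apply/eqP/eqP => [/p_ord_inj|->].
Qed.

Lemma pclique_inj : injective pclique.
Proof. by move=> i j eq_ij; apply/eqP; rewrite -pvertex_in_pclique -eq_ij pvertex_in_pclique. Qed.

Lemma card_pcliques : #|pcliques| = k.
Proof. by rewrite card_imset ?card_ord //; apply: pclique_inj. Qed.

Lemma pcliques_tcc : total_clique_covering V E pcliques.
Proof.
apply/and3P; split.
- by apply/forall_inP => X /imsetP[i _ ->]; apply: pclique_clique.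
- apply/forall_inP => v v_in; have /set0Pn[j] := psupport_neq0 v_in.
  by rewrite inE => p_v; apply/existsP; exists (pclique j); rewrite imset_f // in_pclique v_in.
- apply/forallP => x; apply/forallP => y; apply/implyP; rewrite Gn_edgeE.
  case/and4P => x_in y_in _ gcd_gt1.
  have gcd_n : gcdn x y %| n.
    by move: x_in; rewrite in_Gn_vertices => /andP[_ /(dvdn_trans (dvdn_gcdl _ y))].
  have [j pj] := prime_dvdn_n (pdiv_prime gcd_gt1) (dvdn_trans (pdiv_dvd _) gcd_n).
  apply/existsP; exists (pclique j); rewrite imset_f // !in_pclique x_in y_in -pj.
  by rewrite (dvdn_trans (pdiv_dvd _) (dvdn_gcdl _ _)) (dvdn_trans (pdiv_dvd _) (dvdn_gcdr _ _)).
Qed.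

Lemma clique_sub_pclique X i : is_clique V E X -> pvertex i \in X -> X \subset pclique i.
Proof.
case/andP => /subsetP X_V /forall_inP X_cl pi_X; apply/subsetP => x x_X.
rewrite in_pclique X_V //; have [->|x_pi] := eqVneq x (pvertex i).
  by rewrite pvertexE dvdnn.
have /forall_inP/(_ x x_X) := X_cl _ pi_X.
by rewrite eq_sym x_pi /Gn_adj /= pvertexE gcdn_p_gt1 => /andP[].
Qed.

Definition pvertex_cover (S : {set {set 'I_n.+1}}) i : {set 'I_n.+1} :=
  odflt set0 [pick X in S | pvertex i \in X].

Section Covering.
Variable S : {set {set 'I_n.+1}}.
Hypothesis S_tcc : total_clique_covering V E S.

Lemma pvertex_coverP i : pvertex_cover S i \in S /\ pvertex i \in pvertex_cover S i.
Proof.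
case/and3P: S_tcc => _ /forall_inP/(_ _ (pvertex_in i)) /existsP[X /andP[X_S pi_X]] _.
by rewrite /pvertex_cover; case: pickP => [Y /andP[]|/(_ X)] //; rewrite X_S pi_X.
Qed.

Lemma pvertex_cover_sub i : pvertex_cover S i \subset pclique i.
Proof.
have [cov_S pi_cov] := pvertex_coverP i; apply: clique_sub_pclique pi_cov.
by case/and3P: S_tcc => /forall_inP S_cl _ _; apply: S_cl.
Qed.

Lemma pvertex_cover_inj : injective (pvertex_cover S).
Proof.
move=> i j eq_ij; have [_ pj_cov] := pvertex_coverP j.
by apply/eqP; rewrite eq_sym -pvertex_in_pclique (subsetP (pvertex_cover_sub i)) // eq_ij.
Qed.

Lemma card_tcc_ge : k <= #|S|.
Proof.
rewrite -[k]card_ord -(card_imset _ pvertex_cover_inj); apply/subset_leq_card/subsetP.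
by move=> X /imsetP[i _ ->]; case: (pvertex_coverP i).
Qed.

Lemma tcc_eq_pcliques : #|S| <= k -> S = pcliques.
Proof.
move=> S_le_k.
have S_eq : S = [set pvertex_cover S i | i : 'I_k].
  apply/esym/eqP; rewrite eqEcard (card_imset _ pvertex_cover_inj) card_ord S_le_k andbT.
  by apply/subsetP => X /imsetP[i _ ->]; case: (pvertex_coverP i).
rewrite S_eq; apply: eq_imset => i; apply/eqP; rewrite eqEsubset pvertex_cover_sub.
apply/subsetP => x x_Ci; have [_ pi_cov] := pvertex_coverP i.
have [->//|x_pi] := eqVneq x (pvertex i).
case/and3P: S_tcc => _ _ /forallP/(_ (pvertex i))/forallP/(_ x).
move: x_Ci; rewrite in_pclique => /andP[x_in pi_x].
rewrite Gn_edgeE pvertex_in x_in eq_sym x_pi pvertexE gcdn_p_gt1 pi_x /=.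
case/existsP => X /and3P[]; rewrite {1}S_eq => /imsetP[j _ ->] pi_covj x_covj.
by move: (subsetP (pvertex_cover_sub j) _ pi_covj); rewrite pvertex_in_pclique => /eqP->.
Qed.

End Covering.

Lemma pcliques_min_tcc : min_tcc V E pcliques.
Proof.
rewrite /min_tcc pcliques_tcc card_pcliques.
by apply/forall_inP => S; apply: card_tcc_ge.
Qed.

Lemma min_tcc_pcliques S : min_tcc V E S -> S = pcliques.
Proof.
case/andP => S_tcc /forall_inP/(_ _ pcliques_tcc); rewrite card_pcliques.
exact: tcc_eq_pcliques.
Qed.

Section SupportClass.
Variable A : {set 'I_k}.
Hypothesis A_neq0 : A != set0.

(* Divisors with support [A] are coded by their exponent vectors, stored in
   ['I_n.+1] since every exponent is at most [r i < n]. *)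
Definition exponent_range i : pred 'I_n.+1 :=
  [pred e : 'I_n.+1 | if i \in A then 0 < e <= r i else e == 0 :> nat].

Definition exponents_divisor (f : {ffun 'I_k -> 'I_n.+1}) : 'I_n.+1 :=
  inord (factor_prod (fun i => f i)).

Lemma exponent_range_le [f] : f \in family exponent_range -> forall i, f i <= r i.
Proof.
move/familyP => f_range i; move: (f_range i); rewrite inE.
by case: (i \in A) => [/andP[] | /eqP->].
Qed.

Lemma exponents_divisorE f : f \in family exponent_range ->
  exponents_divisor f = factor_prod (fun i => f i) :> nat.
Proof.
move=> f_range; rewrite inordK // ltnS dvdn_leq ?n_gt0 //.
exact: factor_prod_dvdn_n (exponent_range_le f_range).
Qed.

Lemma card_exponent_family : #|family exponent_range| = \prod_(i in A) r i.
Proof.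
rewrite card_family foldrE big_image [RHS]big_mkcond /=; apply: eq_bigr => i _.
rewrite /exponent_range; case: (i \in A); first by rewrite card_ord_pos_le // ltnS ltnW ?r_lt_n.
exact: card_ord_eq0.
Qed.

Lemma exponents_divisor_class [f] : f \in family exponent_range ->
  exponents_divisor f \in V /\ psupport (exponents_divisor f) = A.
Proof.
move=> f_range; have f_le := exponent_range_le f_range.
have p_div (j : 'I_k) : (p j %| exponents_divisor f) = (j \in A).
  rewrite exponents_divisorE // dvdn_p_factor_prod; move/familyP/(_ j): f_range.
  by rewrite inE; case: (j \in A) => [/andP[]|/eqP->].
split; last by apply/setP => j; rewrite inE p_div.
rewrite in_Gn_vertices {2}exponents_divisorE // factor_prod_dvdn_n // andbT.
have /set0Pn[i i_A] := A_neq0; apply: leq_trans (prime_gt1 (prime_p i)) _.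
by rewrite dvdn_leq ?p_div // exponents_divisorE ?factor_prod_gt0.
Qed.

Lemma psupport_class_exponents [v] : v \in V -> psupport v = A ->
  exists2 f, f \in family exponent_range & v = exponents_divisor f.
Proof.
rewrite in_Gn_vertices => /andP[v_gt1 v_n] v_supp.
have logn_le (j : 'I_k) : logn (p j) v <= r j by rewrite -logn_p_n dvdn_leq_log ?n_gt0.
pose f := [ffun j : 'I_k => inord (logn (p j) v) : 'I_n.+1].
have fE (j : 'I_k) : f j = logn (p j) v :> nat.
  by rewrite ffunE inordK // ltnS (leq_trans (logn_le j)) // ltnW ?r_lt_n.
have f_range : f \in family exponent_range.
  apply/familyP => j; rewrite inE fE -v_supp inE.
  case: ifP => [p_v|/negbT p_v].
    by rewrite logn_le andbT logn_gt0 mem_primes prime_p (ltnW v_gt1).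
  by rewrite eqn0Ngt logn_gt0 mem_primes (negbTE p_v) !andbF.
exists f => //; apply: val_inj; rewrite /= exponents_divisorE //.
by rewrite {1}(dvdn_n_factor_prod v_n); apply: eq_bigr => j _; rewrite fE.
Qed.

Lemma card_psupport_class : #|[set v in V | psupport v == A]| = \prod_(i in A) r i.
Proof.
rewrite -card_exponent_family -(card_in_imset (f := exponents_divisor)); last first.
  move=> f1 f2 f1_range f2_range /(congr1 val); rewrite /= !exponents_divisorE // => eq12.
  by apply/ffunP => j; apply: val_inj; exact: factor_prod_inj eq12 j.
apply: eq_card => v; rewrite inE; apply/andP/imsetP => [[v_in /eqP]|[f f_range ->]].
  by move/(psupport_class_exponents v_in) => [f f_range ->]; exists f.
by have [-> ->] := exponents_divisor_class f_range.
Qed.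

End SupportClass.

Lemma sum_psupport (M : nmodType) (F : {set 'I_k} -> M) :
  (\sum_(v in V) F (psupport v) =
     \sum_(A : {set 'I_k} | A != set0) F A *+ \prod_(i in A) r i)%R.
Proof.
rewrite (partition_big psupport (fun A => A != set0)) => [|v]; last exact: psupport_neq0.
apply: eq_bigr => A A_neq0; rewrite -(card_psupport_class _ A_neq0) -sumr_const.
by apply: eq_big => [v|v /[!inE] /andP[_ /eqP->]]; rewrite // !inE.
Qed.

Definition label_of (t : 'I_k -> 'I_k) (A : {set 'I_k}) : nat := \prod_(i in A) nth_prime (t i).

(* The code obtained by giving the clique of [p i] the prime [nth_prime (t i)]. *)
Definition code_by (t : 'I_k -> 'I_k) : seq nat :=
  sort leq [seq label_of t (psupport v) | v <- enum V].

Lemma eq_code_by [t t' : 'I_k -> 'I_k] : t =1 t' -> code_by t = code_by t'.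
Proof.
by move=> eq_t; congr (sort _ _); apply: eq_map => v; apply: eq_bigr => i _; rewrite eq_t.
Qed.

Lemma label_of_gt0 t A : 0 < label_of t A.
Proof. by apply: prodn_gt0 => i; rewrite prime_gt0 ?nth_prime_prime. Qed.

Lemma dvdn_label_of t [A i] : i \in A -> nth_prime (t i) %| label_of t A.
Proof. by move=> i_A; rewrite /label_of (bigD1 i) //= dvdn_mulr. Qed.

Lemma count_code_by t x : count_mem x (code_by t) =
  (\sum_(A : {set 'I_k} | A != set0) ((label_of t A == x) : nat) *+ \prod_(i in A) r i)%R.
Proof.
rewrite count_sort count_map -sum1_count big_enum_cond /= -sum_psupport.
by rewrite big_mkcondr; apply: eq_bigr => v _; case: eqP.
Qed.

Lemma count_code_by_id t x : injective t ->
  (forall A b, label_of t A = x -> b \in A -> r (t b) = r b) ->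
  count_mem x (code_by t) = count_mem x (code_by id).
Proof.
move=> t_inj r_t; rewrite !count_code_by [RHS](reindex_inj (imset_inj t_inj)) /=.
apply: eq_big => [A|A _]; first by rewrite imset_eq0.
rewrite /label_of !big_imset /=; try by move=> ? ? _ _; apply: t_inj.
case: eqP => [label_x|_]; last by rewrite !mul0rn.
congr (_ *+ _)%R; apply: eq_bigr => i i_A.
by rewrite (r_t A).
Qed.

Lemma count_code_by_nth_prime t a : injective t ->
  count_mem (nth_prime (t a)) (code_by t) = r a.
Proof.
move=> t_inj; rewrite count_code_by (bigD1 [set a]) /=; last first.
  by apply/set0Pn; exists a; rewrite inE.
rewrite /label_of !big_set1 eqxx natn big1 ?addr0 // => A /andP[A_neq0 A_a].
case: eqP => [label_a|_]; last by rewrite mul0rn.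
suff A_sub : A \subset [set a].
  by case/negP: A_a; rewrite eqEcard A_sub cards1 card_gt0.
apply/subsetP => i i_A; have := dvdn_label_of t i_A; rewrite /label_of label_a inE.
by rewrite dvdn_prime2 ?nth_prime_prime // => /eqP/nth_prime_inj/val_inj/t_inj->.
Qed.

Lemma code_by_id t : injective t -> (forall i, r (t i) = r i) -> code_by t = code_by id.
Proof.
move=> t_inj r_t; apply: (sorted_eq leq_trans anti_leq); try exact: (sort_sorted leq_total).
by apply/allP => x _; apply/eqP/count_code_by_id => // A b _ _; apply: r_t.
Qed.

Section Minimality.
Hypothesis r_noninc : forall i j, i <= j -> j < k -> r j <= r i.

Lemma r_first_mismatch t a0 : injective t ->
  (forall b, t b < t a0 -> r (t b) = r b) -> r a0 <= r (t a0).
Proof.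
(* [r] is nonincreasing, so [B] lies below [t a0], where [t] preserves [r]:
   thus [t] maps [t @^-1: B] into [B], and by counting fixes it. *)
move=> t_inj r_t; pose B := [set b : 'I_k | r (t a0) < r b].
have B_sub : t @^-1: B \subset B.
  apply/subsetP => c; rewrite !inE => r_tc; rewrite -(r_t c) // ltnNge.
  by apply/negP => le_tc; move: r_tc; rewrite ltnNge r_noninc.
have B_eq : t @^-1: B = B.
  by apply/eqP; rewrite eqEcard B_sub (card_preimset _ t_inj) leqnn.
have : a0 \notin t @^-1: B by rewrite !inE ltnn.
by rewrite B_eq inE -leqNgt.
Qed.

Lemma code_by_min_preserves_r [t] : injective t ->
  (forall t', injective t' -> lexle (code_by t) (code_by t')) -> forall i, r (t i) = r i.
Proof.
move=> t_inj t_min; suff /forallP r_t : [forall i, r (t i) == r i] by move=> i; apply/eqP/r_t.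
apply: contraT => /forallPn[a1 mis1].
have [a0 mis0 a0_min] :=
  arg_minnP (P := fun a => r (t a) != r a) (fun a => nat_of_ord (t a)) mis1.
have r_t b : t b < t a0 -> r (t b) = r b.
  by move=> lt_b; apply/eqP; apply: contraTT lt_b => /a0_min; rewrite -leqNgt.
have lt_a0 : r a0 < r (t a0) by rewrite ltn_neqAle eq_sym mis0 r_first_mismatch.
suff: ~~ lexle (code_by t) (code_by id) by rewrite t_min.
apply: (sorted_count_lexlt (nth_prime (t a0))); try exact: (sort_sorted leq_total).
- by rewrite !size_sort !size_map.
- move=> x x_lt; symmetry; apply: count_code_by_id => // A b label_x b_A.
  apply: r_t; rewrite -ltn_nth_prime (leq_ltn_trans _ x_lt) // -label_x.
  by rewrite dvdn_leq ?label_of_gt0 ?dvdn_label_of.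
- by rewrite count_code_by_nth_prime // (count_code_by_nth_prime id (t a0)).
Qed.

Lemma primes_label_of_id A :
  perm_eq (primes (label_of id A)) [seq nth_prime i | i : 'I_k <- enum A].
Proof.
apply: uniq_perm; first exact: primes_uniq.
  by rewrite map_inj_uniq ?enum_uniq // => i j /nth_prime_inj/val_inj.
move=> q; rewrite mem_primes label_of_gt0 /=; apply/andP/mapP => [[q_prime]|[i]].
  rewrite Euclid_dvd_prod // big_has_cond => /hasP[i _] /andP[i_A].
  by rewrite dvdn_prime2 ?nth_prime_prime // => /eqP->; exists i; rewrite ?mem_enum.
by rewrite mem_enum => i_A ->; rewrite nth_prime_prime dvdn_label_of.
Qed.

Lemma monomial_label_of_id N (k_le_N : k <= N) A :
  monomial_N N (label_of id A) = (\prod_(i in A) 'X_(widen_ord k_le_N i))%R.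
Proof.
rewrite /monomial_N (perm_big _ (primes_label_of_id A)) big_map big_enum /=.
apply: eq_bigr => i _; rewrite (big_pred1 (widen_ord k_le_N i)) // => j /=.
by apply/eqP/eqP => [/nth_prime_inj j_i|->]; last by []; apply: val_inj.
Qed.

Section NonPrime.
Hypothesis k_gt0 : 0 < k.
Hypothesis n_nprime : ~~ prime n.

Lemma n_in_Gn_vertices : ord_max \in V.
Proof.
rewrite in_Gn_vertices dvdnn andbT /=.
exact: leq_trans (prime_gt1 (prime_p (Ordinal k_gt0))) (dvdn_leq n_gt0 (p_dvdn_n _)).
Qed.

Lemma Gn_no_isolated v : ~~ isolated V E v.
Proof.
rewrite /isolated negb_and negb_forall; have [v_in|] //= := boolP (v \in V).
apply/existsP; have [->|v_n] := eqVneq v ord_max.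
  exists (pvertex (Ordinal k_gt0)); rewrite negbK Gn_edgeE n_in_Gn_vertices pvertex_in /=.
  rewrite gcdnC pvertexE gcdn_p_gt1 p_dvdn_n andbT; apply/eqP => /(congr1 val).
  by rewrite /= pvertexE => n_p; move: n_nprime; rewrite n_p prime_p.
exists ord_max; rewrite negbK Gn_edgeE n_in_Gn_vertices v_in v_n /=.
by move: v_in; rewrite in_Gn_vertices => /andP[v_gt1 /gcdn_idPl->].
Qed.

Lemma nonisolated_cliques_Gn S : nonisolated_cliques V E S = S.
Proof.
rewrite /nonisolated_cliques (_ : [set v | isolated V E v] = set0) ?imset0 ?setD0 //.
by apply/setP => v; rewrite !inE (negbTE (Gn_no_isolated v)).
Qed.

Definition clique_seq := enum (nonisolated_cliques V E pcliques).
Local Notation m := (size clique_seq).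

Lemma mem_clique_seq X : (X \in clique_seq) = (X \in pcliques).
Proof. by rewrite mem_enum nonisolated_cliques_Gn. Qed.

Lemma size_clique_seq : m = k.
Proof. by rewrite -cardE nonisolated_cliques_Gn card_pcliques. Qed.

Lemma pclique_in_clique_seq i : pclique i \in clique_seq.
Proof. by rewrite mem_clique_seq imset_f. Qed.

Definition clique_index i : 'I_m :=
  Ordinal (etrans (index_mem (pclique i) clique_seq) (pclique_in_clique_seq i)).

Lemma nth_clique_index i : nth set0 clique_seq (clique_index i) = pclique i.
Proof. by rewrite nth_index ?pclique_in_clique_seq. Qed.

Lemma clique_index_bij : bijective clique_index.
Proof.
apply: inj_card_bij; last by rewrite !card_ord size_clique_seq.
move=> i j /(congr1 (nth set0 clique_seq \o val)).
by rewrite /= !nth_clique_index => /pclique_inj.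
Qed.

(* The bijections of [clique_seq] onto the first primes, as used by [label],
   seen as assignments of primes to the cliques [pclique i]. *)
Definition perm_assignment (s : 'S_m) i : 'I_k :=
  cast_ord size_clique_seq (s (clique_index i)).

Lemma perm_assignment_inj s : injective (perm_assignment s).
Proof. by move=> i j /cast_ord_inj /perm_inj /(bij_inj clique_index_bij). Qed.

Lemma perm_assignment_surj [t] : injective t -> exists s, perm_assignment s =1 t.
Proof.
move=> t_inj; have [g index_g g_index] := clique_index_bij.
have tg_inj : injective (fun j => cast_ord (esym size_clique_seq) (t (g j))).
  by move=> x y /cast_ord_inj /t_inj /(can_inj g_index).
by exists (perm tg_inj) => i; rewrite /perm_assignment permE index_g; apply: val_inj.
Qed.

Lemma label_pcliques s v : v \in V ->
  label (S := pcliques) s v = label_of (perm_assignment s) (psupport v).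
Proof.
move=> v_in; rewrite /label (negbTE (Gn_no_isolated v)) /label_of.
rewrite (reindex clique_index) /=; last exact: onW_bij clique_index_bij.
by apply: eq_bigl => i; rewrite nth_clique_index in_pclique v_in inE.
Qed.

Lemma code_of_pcliques s :
  code_of (V := V) (e := E) (S := pcliques) s = code_by (perm_assignment s).
Proof.
congr (sort _ _); apply/eq_in_map => v.
by rewrite mem_enum => v_in; rewrite label_pcliques.
Qed.

Lemma all_codes_Gn c :
  (c \in all_codes V E) = [exists s, c == code_by (perm_assignment s)].
Proof.
apply/flatten_mapP/existsP => [[S]|[s /eqP->]].
  rewrite mem_enum inE => /min_tcc_pcliques->; case/mapP => s _ ->.
  by exists s; rewrite code_of_pcliques.
exists pcliques; first by rewrite mem_enum inE pcliques_min_tcc.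
by rewrite -code_of_pcliques; apply: map_f; rewrite mem_enum inE.
Qed.

Lemma code_Gn_min : exists2 tau, injective tau &
  code V E = code_by tau /\ forall t, injective t -> lexle (code_by tau) (code_by t).
Proof.
have code1_in : code_by (perm_assignment 1%g) \in all_codes V E.
  by rewrite all_codes_Gn; apply/existsP; exists 1%g.
have : code V E \in all_codes V E by apply: lexmin_mem; apply: contraTneq code1_in => ->.
rewrite all_codes_Gn => /existsP[s /eqP code_s].
exists (perm_assignment s); first exact: perm_assignment_inj.
split=> // t t_inj; have [s' s't] := perm_assignment_surj t_inj.
rewrite -code_s -(eq_code_by s't); apply: lexmin_le.
by rewrite all_codes_Gn; apply/existsP; exists s'.
Qed.

Lemma code_Gn : code V E = code_by id.
Proof.
have [tau tau_inj [-> tau_min]] := code_Gn_min.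
exact: code_by_id tau_inj (code_by_min_preserves_r tau_inj tau_min).
Qed.

Lemma F_Gn_psupport N (k_le_N : k <= N) : F_Gn N n =
  (\sum_(A : {set 'I_k} | A != set0)
     (\prod_(i in A) 'X_(widen_ord k_le_N i)) *+ \prod_(i in A) r i)%R.
Proof.
rewrite /F_Gn /normal_poly_N code_Gn (perm_big _ (permEl (perm_sort _ _))) big_map big_enum /=.
rewrite -sum_psupport; apply: eq_bigr => v _; exact: monomial_label_of_id.
Qed.

End NonPrime.

End Minimality.

End DivisorGraph.

Section PrimeCase.
Variable n : nat.
Hypothesis n_prime : prime n.
Local Notation V := (Gn_vertices n).
Local Notation E := (Gn_adj n).

Lemma Gn_vertices_prime : V = [set ord_max].
Proof.
apply/setP => v; rewrite !inE; apply/andP/eqP => [[v_gt1 v_n]|->].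
  by apply/val_inj/(prime_nt_dvdP n_prime) => //; rewrite neq_ltn v_gt1 orbT.
by rewrite /= prime_gt1.
Qed.

Lemma Gn_no_edge_prime x y : ~~ is_edge V E x y.
Proof.
rewrite /is_edge Gn_vertices_prime !inE.
by case: eqP => // ->; case: eqP => // ->; rewrite eqxx andbF.
Qed.

Lemma ord_max_in_prime : ord_max \in V.
Proof. by rewrite Gn_vertices_prime inE. Qed.

Lemma isolated_ord_max_prime : isolated V E ord_max.
Proof. by rewrite /isolated ord_max_in_prime; apply/forallP => u; apply: Gn_no_edge_prime. Qed.

Lemma code_of_prime S s : code_of (V := V) (e := E) (S := S) s = [:: 1].
Proof.
rewrite /code_of; have -> : enum V = [:: ord_max] by rewrite Gn_vertices_prime enum_set1.
by rewrite /= /label isolated_ord_max_prime.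
Qed.

Lemma singleton_min_tcc_prime : min_tcc V E [set [set ord_max]].
Proof.
have tcc_ord_max : total_clique_covering V E [set [set ord_max]].
  apply/and3P; split.
  - apply/forall_inP => X /[!inE] /eqP->; rewrite /is_clique Gn_vertices_prime subxx /=.
    by apply/forall_inP => x /[!inE] /eqP->; apply/forall_inP => y /[!inE] /eqP->; rewrite eqxx.
  - apply/forall_inP => v; rewrite Gn_vertices_prime => v_max.
    by apply/exists_inP; exists [set ord_max]; rewrite // inE.
  - by apply/forallP => x; apply/forallP => y; rewrite (negbTE (Gn_no_edge_prime x y)).
rewrite /min_tcc tcc_ord_max cards1; apply/forall_inP => S /and3P[_ /forall_inP cover _].
have /existsP[X /andP[X_S _]] := cover ord_max ord_max_in_prime.
by rewrite card_gt0; apply/set0Pn; exists X.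
Qed.

Lemma code_Gn_prime : code V E = [:: 1].
Proof.
have code1_in : code_of (V := V) (e := E) (S := [set [set ord_max]]) 1%g \in all_codes V E.
  apply/flatten_mapP; exists [set [set ord_max]].
    by rewrite mem_enum inE singleton_min_tcc_prime.
  by apply: map_f; rewrite mem_enum inE.
have: code V E \in all_codes V E by apply: lexmin_mem; apply: contraTneq code1_in => ->.
by case/flatten_mapP => S _ /mapP[s _ ->]; rewrite code_of_prime.
Qed.

Lemma F_Gn_prime N : F_Gn N n = 1%R.
Proof. by rewrite /F_Gn /normal_poly_N code_Gn_prime big_seq1 /monomial_N big_nil. Qed.

End PrimeCase.

Local Open Scope ring_scope.

Theorem theorem5 (n k : nat) (p r : nat -> nat) :
  (1 <= k)%N ->
  (forall i, (i < k)%N -> prime (p i)) ->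
  (forall i j, (i < k)%N -> (j < k)%N -> p i = p j -> i = j) ->
  (forall i j, (i <= j)%N -> (j < k)%N -> (r j <= r i)%N) ->
  (forall i, (i < k)%N -> (1 <= r i)%N) ->
  n = (\prod_(i < k) p i ^ r i)%N ->
  (~~ prime n ->
     forall N : nat, (k <= N)%N ->
       F_Gn N n =
       \sum_(I : {set 'I_N} | (I != set0) && [forall i in I, (i < k)%N])
          \prod_(i in I) ((r i)%:R * 'X_i)) /\
  (prime n -> forall N : nat, F_Gn N n = 1).
Proof.
move=> k_gt0 p_prime p_inj r_noninc r_gt0 nE; split=> [n_nprime N k_le_N|n_prime N].
  rewrite (F_Gn_psupport p_prime p_inj nE r_gt0 r_noninc k_gt0 n_nprime N k_le_N).
  rewrite sum_widen_set; apply: eq_bigr => A _.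
  rewrite big_imset /=; last exact: in2W (widen_ord_inj k_le_N).
  by rewrite big_split /= -natr_prod mulr_natl.
exact: F_Gn_prime.
Qed.
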